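(* Let $\mathcal A=\sum_{\alpha\in I_N}\langle\mathbf A_\alpha(\mathbf k,\mathbf x_\alpha)\cdot\rangle_\alpha$ be an operator on $L^2([0,1)^N,\mathbb C^M)$ with $h$-staircase $M\times M$ matrix coefficients $\mathbf A_\alpha$. If $\mathcal A=0$ then $\mathbf A_\alpha=0$ for all $\alpha\in I_N$; i.e. the representation of an operator in this form is unique.
   Context: Let $N,M,p$ be positive integers and $h=1/p$. $I_N$ is the set of all subsets of $\{1,\dots,N\}$; for $\alpha\in I_N$, $|\alpha|$ is its cardinality and $\bar\alpha$ its complement. For $\mathbf x=(x_i)$, $\mathbf x_\alpha=(x_i)_{i\in\alpha}\in[0,1)^{|\alpha|}$ (increasing indices). For disjoint $\alpha,\beta$, $\mathbf y_\beta\diamond\mathbf x_\alpha=\mathbf z_{\alpha\cup\beta}$ with $z_i=x_i$ for $i\in\alpha$, $z_i=y_i$ for $i\in\beta$. $\langle f\rangle_\alpha=\int_{[0,1)^{|\alpha|}}f\,d\mathbf x_\alpha$, $\langle f\rangle_\emptyset=f$. $\chi^h_i$ is the indicator of $[i/p,(i+1)/p)$; a function on $[0,1)^R$ is $h$-staircase if it is a finite linear combination of $\prod_{j=1}^R\chi^h_{i_j}(y_j)$, a matrix function is $h$-staircase if all entries are. For an $h$-staircase $\mathbf A(\mathbf k,\mathbf x_\alpha)$ on $[0,1)^N\times[0,1)^{|\alpha|}$, $\langle\mathbf A(\mathbf k,\mathbf x_\alpha)\cdot\rangle_\alpha$ denotes the operator $\mathbf u\mapsto\langle\mathbf A(\mathbf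 k,\mathbf x_\alpha)\mathbf u(\mathbf k_{\bar\alpha}\diamond\mathbf x_\alpha)\rangle_\alpha$ (multiplication by $\mathbf A(\mathbf k)$ if $\alpha=\emptyset$). *)

From HB Require Import structures.
From mathcomp Require Import all_boot all_order all_algebra.
From mathcomp Require Import complex.
From mathcomp Require Import all_classical all_reals all_analysis.
Set Implicit Arguments. Unset Strict Implicit. Unset Printing Implicit Defensive.
Import Order.TTheory GRing.Theory Num.Theory.
Local Open Scope ring_scope.
Local Open Scope classical_set_scope.

Section Defs.
Variable R : realType.

Definition in_cube n (y : n.-tuple R) : Prop :=
  forall j : 'I_n, 0 <= tnth y j < 1.

(* chi^h_i with h = 1/p : indicator of [i/p, (i+1)/p) *)
Definition chi (p i : nat) (t : R) : R[i] :=
  if (i%:R / p%:R <= t) && (t < i.+1%:R / p%:R) then 1 else 0.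

(* a complex function of (k, x) in [0,1)^n x [0,1)^m is h-staircase:
   a finite linear combination of products of chi^h_{i_j}(y_j) over all
   n + m coordinates y = (k, x) (indices i_j in {0,..,p-1}; indicators
   with other indices vanish on [0,1)). *)
Definition staircase (p n m : nat) (f : n.-tuple R -> m.-tuple R -> R[i]) : Prop :=
  exists c : n.-tuple 'I_p -> m.-tuple 'I_p -> R[i],
    forall k x, in_cube k -> in_cube x ->
      f k x = \sum_(ii : n.-tuple 'I_p) \sum_(jj : m.-tuple 'I_p)
                c ii jj * (\prod_(j < n) chi p (tnth ii j) (tnth k j))
                        * (\prod_(j < m) chi p (tnth jj j) (tnth x j)).

Definition mx_staircase (p n m M : nat)
    (A : n.-tuple R -> m.-tuple R -> 'M[R[i]]_M) : Prop :=
  forall i j : 'I_M, staircase p (fun k x => A k x i j).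

Fixpoint riint (n : nat) : (n.-tuple R -> R) -> R :=
  match n return (n.-tuple R -> R) -> R with
  | 0 => fun f => f [tuple]
  | m.+1 => fun f =>
      Rintegral (@lebesgue_measure R) `[0%R, 1%R[
        (fun t => riint (fun y : m.-tuple R => f (cons_tuple t y)))
  end.

Fixpoint eiint (n : nat) : (n.-tuple R -> \bar R) -> \bar R :=
  match n return (n.-tuple R -> \bar R) -> \bar R with
  | 0 => fun f => f [tuple]
  | m.+1 => fun f =>
      (\int[@lebesgue_measure R]_(t in `[0%R, 1%R[)
        eiint (fun y : m.-tuple R => f (cons_tuple t y)))%E
  end.

Definition cint (n : nat) (f : n.-tuple R -> R[i]) : R[i] :=
  Complex (riint (fun x => complex.Re (f x))) (riint (fun x => complex.Im (f x))).

(* y_{bar alpha} <> x_alpha : coordinates in alpha (in increasing order)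
   taken from x, the others from k *)
Definition diamond (N : nat) (alpha : {set 'I_N}) (k : N.-tuple R)
    (x : #|alpha|.-tuple R) : N.-tuple R :=
  [tuple (if i \in alpha then nth 0 x (index i (enum alpha)) else tnth k i)
   | i < N].

Definition opA (N M : nat)
    (A : forall alpha : {set 'I_N}, N.-tuple R -> #|alpha|.-tuple R -> 'M[R[i]]_M)
    (u : N.-tuple R -> 'I_M -> R[i]) (k : N.-tuple R) (i : 'I_M) : R[i] :=
  \sum_(alpha : {set 'I_N})
     cint (fun x : #|alpha|.-tuple R =>
             \sum_(j < M) A alpha k x i j * u (diamond k x) j).

Definition sqnorm (M : nat) (v : 'I_M -> R[i]) : R :=
  \sum_(i < M) (complex.Re (v i) ^+ 2 + complex.Im (v i) ^+ 2).

Definition inL2 (N M : nat) (u : N.-tuple R -> 'I_M -> R[i]) : Prop :=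
  (forall i : 'I_M,
      measurable_fun [set: N.-tuple R] (fun k => complex.Re (u k i)) /\
      measurable_fun [set: N.-tuple R] (fun k => complex.Im (u k i))) /\
  (eiint (fun k => (sqnorm (u k))%:E) < +oo)%E.

End Defs.

From HB Require Import structures.
From mathcomp Require Import all_boot all_order all_algebra.
From mathcomp Require Import complex.
From mathcomp Require Import all_classical all_reals all_analysis.
From mathcomp Require Import measurable_realfun.
From mathcomp Require Import ring lra zify.
Import Order.TTheory GRing.Theory Num.Theory.
Set Implicit Arguments. Unset Strict Implicit. Unset Printing Implicit Defensive.
Local Open Scope ring_scope.
Local Open Scope complex_scope.

(* Induction on |b|: assume A_a = 0 whenever |a| < |b|, and fix the entry
   (i0, j0) of A_b at (k0, x0).  Test the operator on
   u = e_j0 * prod_i f_i(k_i), where for i in b the factor f_i is the indicator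
   of the h-cell containing the i-th coordinate of k0 <> x0, while for i
   outside b it is the Haar-type function equal to +1 on the left half and -1
   on the right half of every h-cell.  Staircase coefficients are constant on
   h-cells and the Haar factor has mean zero on each of them, so the terms with
   a not contained in b vanish; those with a strictly inside b vanish by
   induction.  What is left is
     (A u)_i0(k) = p^-|b| * prod_(i \notin b) f_i(k_i) * A_b(k, x0)_i0j0,
   which equals the constant p^-|b| A_b(k0, x0)_i0j0 on the product of the
   left halves of the h-cells of the coordinates of k0, a set of measure
   (2p)^-N.  Hence ||A u|| = 0 forces that entry to vanish. *)

Section Cells.
Variable R : realType.
Implicit Types (q a : nat) (s t : R).

Definition chiR q a t : R :=
  if (a%:R / q%:R <= t) && (t < a.+1%:R / q%:R) then 1 else 0.

Lemma chiE q a t : chi q a t = (chiR q a t)%:C.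
Proof. by rewrite /chi /chiR; case: ifP. Qed.

Lemma chiR01 q a t : chiR q a t = 0 \/ chiR q a t = 1.
Proof. by rewrite /chiR; case: ifP; auto. Qed.

Lemma chiR_ge0 q a t : 0 <= chiR q a t.
Proof. by case: (chiR01 q a t) => ->. Qed.

Lemma chiR_le1 q a t : chiR q a t <= 1.
Proof. by case: (chiR01 q a t) => ->. Qed.

Lemma chiR_mul q a a' t : (0 < q)%N ->
  chiR q a t * chiR q a' t = if a == a' then chiR q a t else 0.
Proof.
move=> q0; case: eqP => [->|/eqP ne_aa'].
  by case: (chiR01 q a' t) => ->; rewrite ?mulr0 ?mulr1.
have qR : 0 < (q%:R : R) by rewrite ltr0n.
wlog lt_aa' : a a' ne_aa' / (a < a')%N.
  move=> H; case: (ltngtP a a') => [|h|h]; first exact: H.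
    by rewrite mulrC; apply: H => //; rewrite eq_sym.
  by rewrite h eqxx in ne_aa'.
rewrite /chiR; case: ifP => [/andP[_ lt1]|]; last by rewrite mul0r.
case: ifP => [/andP[le2 _]|]; last by rewrite mulr0.
have : a.+1%:R / q%:R <= a'%:R / q%:R :> R by rewrite ler_pM2r ?invr_gt0 // ler_nat.
lra.
Qed.

Lemma chiR_eq1E q a t : (0 < q)%N -> chiR q a t = 1 ->
  forall a', chiR q a' t = (a' == a)%:R.
Proof.
move=> q0 h a'; have := chiR_mul a' a t q0; rewrite h mulr1 => ->.
by case: eqP => [->|] //; rewrite h.
Qed.

Lemma chiR_halves q a t : (0 < q)%N ->
  chiR q a t = chiR (2 * q) (2 * a) t + chiR (2 * q) (2 * a).+1 t.
Proof.
move=> q0; have qR : 0 < (q%:R : R) by rewrite ltr0n.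
have e1 : ((2 * a)%:R / (2 * q)%:R : R) = a%:R / q%:R.
  by rewrite !natrM -mulf_div divff ?mul1r // pnatr_eq0.
have e2 : ((2 * a).+2%:R / (2 * q)%:R : R) = a.+1%:R / q%:R.
  rewrite -addn2 -[(2 * a + 2)%N]mulnSr.
  by rewrite !natrM -mulf_div divff ?mul1r // pnatr_eq0.
have l1 : (a%:R / q%:R : R) <= (2 * a).+1%:R / (2 * q)%:R.
  by rewrite -e1 ler_pM2r ?invr_gt0 ?ltr0n ?muln_gt0 // ler_nat.
have l2 : ((2 * a).+1%:R / (2 * q)%:R : R) <= a.+1%:R / q%:R.
  by rewrite -e2 ler_pM2r ?invr_gt0 ?ltr0n ?muln_gt0 // ler_nat.
rewrite /chiR e1 e2; move: l1 l2.
set lo := a%:R / q%:R; set mid := _ / _; set hi := _ / q%:R => l1 l2.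
case: (lerP lo t) => h1; case: (ltrP t mid) => h2; case: (lerP mid t) => h3;
  case: (ltrP t hi) => h4 /=; rewrite ?addr0 ?add0r //; lra.
Qed.

Lemma chiR_left_half q a t : (0 < q)%N ->
  chiR (2 * q) (2 * a) t = 1 -> chiR q a t = 1.
Proof.
move=> q0 h; have q20 : (0 < 2 * q)%N by rewrite muln_gt0.
rewrite (chiR_halves _ _ q0) h (chiR_eq1E q20 h) (_ : (_ == _) = false) ?addr0 //.
by apply/eqP; lia.
Qed.

Lemma exists_chiR_eq1 q t : (0 < q)%N -> 0 <= t < 1 ->
  exists a : 'I_q, chiR q a t = 1.
Proof.
move=> q0 /andP[t0 t1]; have qR : 0 < (q%:R : R) by rewrite ltr0n.
have tq0 : 0 <= t * q%:R by rewrite mulr_ge0 // ltW.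
have /andP[h1 h2] := truncn_itv tq0.
have lt_q : (Num.truncn (t * q%:R) < q)%N.
  rewrite -(ltr_nat R); apply: (le_lt_trans h1).
  by rewrite -[X in _ < X]mul1r ltr_pM2r.
exists (Ordinal lt_q); rewrite /chiR /=.
by rewrite ler_pdivrMr // ltr_pdivlMr // h1 h2.
Qed.

Lemma sum_chiR q t : (0 < q)%N -> 0 <= t < 1 -> \sum_(a < q) chiR q a t = 1.
Proof.
move=> q0 ht; have [a0 h0] := exists_chiR_eq1 q0 ht.
rewrite (bigD1 a0) //= h0 big1 ?addr0 // => a ne_a.
by rewrite (chiR_eq1E q0 h0) (inj_eq val_inj) (negbTE ne_a).
Qed.

End Cells.

Section TestFunctions.
Variables (R : realType) (p : nat).
Hypothesis p_gt0 : (0 < p)%N.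
Implicit Types (s t : R).

Definition same_cell s t : R := \sum_(m < p) chiR p m s * chiR p m t.

Definition haar t : R :=
  \sum_(m < p) (chiR (2 * p) (2 * m) t - chiR (2 * p) (2 * m).+1 t).

Definition left_half s t : R := \sum_(m < p) chiR p m s * chiR (2 * p) (2 * m) t.

Let p2_gt0 : (0 < 2 * p)%N. Proof. by rewrite muln_gt0. Qed.

Lemma chiR_same_cell (m : 'I_p) s t :
  chiR p m t * same_cell s t = chiR p m s * chiR p m t.
Proof.
rewrite /same_cell mulr_sumr (bigD1 m) //= mulrCA chiR_mul // eqxx big1 ?addr0 //.
by move=> m' ne_m; rewrite mulrCA chiR_mul // (inj_eq val_inj) eq_sym (negbTE ne_m) mulr0.
Qed.

Lemma chiR_haar (m : 'I_p) t :
  chiR p m t * haar t = chiR (2 * p) (2 * m) t - chiR (2 * p) (2 * m).+1 t.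
Proof.
rewrite /haar mulr_sumr (bigD1 m) //= big1 => [|m' ne_m].
  rewrite addr0 (chiR_halves _ _ p_gt0) mulrBr !mulrDl !chiR_mul // !eqxx.
  by rewrite (ltn_eqF (ltnSn _)) (gtn_eqF (ltnSn _)) addr0 add0r.
have ne : (m : nat) != m' by rewrite (inj_eq val_inj) eq_sym.
have e1 : (2 * m == 2 * m')%N = false by apply/eqP; lia.
have e2 : (2 * m == (2 * m').+1)%N = false by apply/eqP; lia.
have e3 : ((2 * m).+1 == 2 * m')%N = false by apply/eqP; lia.
have e4 : ((2 * m).+1 == (2 * m').+1)%N = false by apply/eqP; lia.
rewrite (chiR_halves _ _ p_gt0) mulrBr !mulrDl !chiR_mul // e1 e2 e3 e4.
by rewrite subrr.
Qed.

Lemma haar_left_half (m : 'I_p) t : chiR (2 * p) (2 * m) t = 1 -> haar t = 1.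
Proof.
move=> h; rewrite /haar (bigD1 m) //= !(chiR_eq1E p2_gt0 h) eqxx.
rewrite (_ : ((2 * m).+1 == 2 * m)%N = false) ?subr0; last by apply/eqP; lia.
rewrite big1 ?addr0 // => m' ne_m.
have ne : (m' : nat) != m by rewrite (inj_eq val_inj).
have e1 : (2 * m' == 2 * m)%N = false by apply/eqP; lia.
have e2 : ((2 * m').+1 == 2 * m)%N = false by apply/eqP; lia.
by rewrite !(chiR_eq1E p2_gt0 h) e1 e2 subr0.
Qed.

Lemma norm_chiR_le1 q a t : `|chiR q a t| <= 1.
Proof. by case: (chiR01 q a t) => ->; rewrite ?normr0 ?normr1. Qed.

Lemma norm_same_cell_le s t : `|same_cell s t| <= p%:R.
Proof.
apply: le_trans (ler_norm_sum _ _ _) _.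
rewrite -[X in _ <= X%:R]card_ord -sumr_const; apply: ler_sum => m _.
by rewrite normrM -[1]mulr1 ler_pM ?norm_chiR_le1.
Qed.

Lemma norm_haar_le t : `|haar t| <= p%:R.
Proof.
apply: le_trans (ler_norm_sum _ _ _) _.
rewrite -[X in _ <= X%:R]card_ord -sumr_const; apply: ler_sum => m _.
by case: (chiR01 (2 * p) (2 * m) t) => ->; case: (chiR01 (2 * p) (2 * m).+1 t) => ->;
  rewrite ?subrr ?subr0 ?sub0r ?normrN ?normr0 ?normr1.
Qed.

Lemma left_half_ge0 s t : 0 <= left_half s t.
Proof. by apply: sumr_ge0 => m _; rewrite mulr_ge0 ?chiR_ge0. Qed.

Lemma left_half_le1 s t : 0 <= s < 1 -> left_half s t <= 1.
Proof.
move=> hs; rewrite -(sum_chiR p_gt0 hs); apply: ler_sum => m _.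
by rewrite -[X in _ <= X]mulr1 ler_wpM2l ?chiR_ge0 ?chiR_le1.
Qed.

Lemma left_half_neq0 s t : left_half s t != 0 ->
  exists m : 'I_p, chiR p m s = 1 /\ chiR (2 * p) (2 * m) t = 1.
Proof.
move=> nz; have [m m_nz] : exists m : 'I_p, chiR p m s * chiR (2 * p) (2 * m) t != 0.
  apply/existsP; apply: contraNT nz => /existsPn h; apply/eqP.
  by apply: big1 => m _; have := h m; rewrite negbK => /eqP.
exists m; move: m_nz; case: (chiR01 p m s) => ->; rewrite ?mul0r ?eqxx // mul1r.
by case: (chiR01 (2 * p) (2 * m) t) => ->; rewrite ?eqxx.
Qed.

End TestFunctions.

Section UnitIntervalIntegrals.
Local Open Scope classical_set_scope.
Variable R : realType.
Local Notation mu := (@lebesgue_measure R).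
Local Notation I01 := (`[(0:R), (1:R)[ : set (measurableTypeR R)).
Implicit Types (q a : nat) (s t : R) (f : R -> R).

Let mI01 : measurable I01. Proof. exact: measurable_itv. Qed.

Lemma lebesgue_measure_I01 : mu I01 = 1%E.
Proof. by have := @lebesgue_measure_itv R `[0, 1[%R; rewrite /= lte01 EFinN sube0. Qed.

Lemma chiR_indicator q a : @chiR R q a = \1_(`[a%:R / q%:R, a.+1%:R / q%:R[ : set R).
Proof.
apply/funext => t; rewrite indicE /chiR.
rewrite (_ : (t \in _) = (a%:R / q%:R <= t) && (t < a.+1%:R / q%:R)); first by case: ifP.
by apply/idP/idP; rewrite inE /= in_itv.
Qed.

Lemma measurable_chiR q a : measurable_fun setT (@chiR R q a).
Proof. by rewrite chiR_indicator; apply: measurable_indic; exact: measurable_itv. Qed.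

Lemma integrable_chiR q a : mu.-integrable I01 (EFin \o chiR q a).
Proof.
apply: measurable_bounded_integrable => //.
- by move: lebesgue_measure_I01 => /= ->; exact: ltry.
- exact: measurable_funS (measurable_chiR q a).
- exists 1; split => // x x1 y _ /=; rewrite ger0_norm ?chiR_ge0 //.
  exact: le_trans (chiR_le1 _ _ _) (ltW x1).
Qed.

Lemma Rintegral_chiR q a : (0 < q)%N -> (a < q)%N ->
  \int[mu]_(t in I01) chiR q a t = q%:R^-1.
Proof.
move=> q0 aq; have qR : 0 < (q%:R : R) by rewrite ltr0n.
rewrite /Rintegral chiR_indicator integral_indic; [|exact: measurable_itv..].
have -> : `[a%:R / q%:R, a.+1%:R / q%:R[ `&` I01 = `[a%:R / q%:R, a.+1%:R / q%:R[.
  apply/seteqP; split => t; first by move=> [].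
  move=> /= ht; split => //; move: ht; rewrite /= !in_itv /= => /andP[h1 h2].
  have : 0 <= a%:R / q%:R :> R by rewrite divr_ge0.
  have : a.+1%:R / q%:R <= 1 :> R by rewrite ler_pdivrMr // mul1r ler_nat.
  by move=> ? ?; apply/andP; split; lra.
have := @lebesgue_measure_itv R `[a%:R / q%:R, a.+1%:R / q%:R[%R; move=> /= ->.
rewrite lte_fin ltr_pM2r ?invr_gt0 // ltr_nat ltnSn /=.
by rewrite -mulrBl -natrB // subSnn mul1r.
Qed.

Lemma integrableZl_EFin (k : R) f : mu.-integrable I01 (EFin \o f) ->
  mu.-integrable I01 (EFin \o (fun t => k * f t)).
Proof.
move=> h; have := integrableZl mI01 k h.
by apply: eq_integrable => // t _ /=; rewrite EFinM.
Qed.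

Lemma integrable_sum_EFin (I : finType) (F : I -> R -> R) :
  (forall r, mu.-integrable I01 (EFin \o F r)) ->
  mu.-integrable I01 (EFin \o (fun t => \sum_r F r t)).
Proof.
move=> h; have := @integrable_sum _ _ _ mu _ mI01 I (index_enum I) xpredT
  (fun r t => (F r t)%:E) (fun r _ => h r).
by apply: eq_integrable => // t _ /=; rewrite sumEFin.
Qed.

Lemma Rintegral_sum (I : finType) (F : I -> R -> R) :
  (forall r, mu.-integrable I01 (EFin \o F r)) ->
  \int[mu]_(t in I01) (\sum_r F r t) = \sum_r \int[mu]_(t in I01) F r t.
Proof.
move=> hF; rewrite /Rintegral.
under eq_integral do rewrite -sumEFin.
rewrite (@integral_sum _ _ _ mu _ mI01 _ (fun r t => (F r t)%:E) hF).
by rewrite sum_fine // => r _; exact: (integrable_fin_num mI01 (hF r)).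
Qed.

Section TestFunctionIntegrals.
Variable p : nat.
Hypothesis p_gt0 : (0 < p)%N.
Let p2_gt0 : (0 < 2 * p)%N. Proof. by rewrite muln_gt0. Qed.

Lemma integrable_chiR_same_cell (m : 'I_p) s :
  mu.-integrable I01 (EFin \o (fun t => chiR p m t * same_cell p s t)).
Proof.
have := integrableZl_EFin (chiR p m s) (integrable_chiR p m).
by apply: eq_integrable => // t _ /=; rewrite chiR_same_cell.
Qed.

Lemma Rintegral_chiR_same_cell (m : 'I_p) s :
  \int[mu]_(t in I01) (chiR p m t * same_cell p s t) = chiR p m s / p%:R.
Proof.
under eq_Rintegral do rewrite chiR_same_cell //.
by rewrite RintegralZl ?integrable_chiR // Rintegral_chiR.
Qed.

Lemma integrable_chiR_haar (m : 'I_p) :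
  mu.-integrable I01 (EFin \o (fun t => chiR p m t * haar p t)).
Proof.
have := integrableB mI01 (integrable_chiR (2 * p) (2 * m))
  (integrable_chiR (2 * p) (2 * m).+1).
by apply: eq_integrable => // t _ /=; rewrite chiR_haar.
Qed.

Lemma Rintegral_chiR_haar (m : 'I_p) :
  \int[mu]_(t in I01) (chiR p m t * haar p t) = 0.
Proof.
under eq_Rintegral do rewrite chiR_haar //.
rewrite RintegralB ?integrable_chiR //.
by have m_lt := ltn_ord m; rewrite !Rintegral_chiR ?subrr //; lia.
Qed.

Lemma integrable_left_half s : mu.-integrable I01 (EFin \o left_half p s).
Proof. by apply: integrable_sum_EFin => m; exact: integrableZl_EFin (integrable_chiR _ _). Qed.

Lemma Rintegral_left_half s : 0 <= s < 1 ->
  \int[mu]_(t in I01) left_half p s t = (2 * p)%:R^-1.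
Proof.
move=> hs; rewrite Rintegral_sum => [|m]; last exact: integrableZl_EFin (integrable_chiR _ _).
transitivity ((\sum_(m < p) chiR p m s) * (2 * p)%:R^-1).
  rewrite mulr_suml; apply: eq_bigr => m _; have m_lt := ltn_ord m.
  by rewrite RintegralZl //; [rewrite Rintegral_chiR //; lia|exact: integrable_chiR].
by rewrite sum_chiR ?mul1r.
Qed.

Lemma measurable_same_cell s : measurable_fun setT (same_cell p s).
Proof.
by apply: measurable_sum => m; apply: measurable_funM => //; exact: measurable_chiR.
Qed.

Lemma measurable_haar : measurable_fun setT (@haar R p).
Proof. by apply: measurable_sum => m; apply: measurable_funB; exact: measurable_chiR. Qed.

End TestFunctionIntegrals.
End UnitIntervalIntegrals.

Section CubeIntegrals.
Local Open Scope classical_set_scope.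
Variable R : realType.
Local Notation mu := (@lebesgue_measure R).
Local Notation I01 := (`[(0:R), (1:R)[ : set (measurableTypeR R)).

Let mI01 : measurable I01. Proof. exact: measurable_itv. Qed.

Lemma in_cube_cons n (t : R) (y : n.-tuple R) :
  in_cube (cons_tuple t y) <-> (0 <= t < 1) /\ in_cube y.
Proof.
have tnth_cons j : tnth (cons_tuple t y) (lift ord0 j) = tnth y j by rewrite !(tnth_nth 0).
split => [h|[ht hy] j].
  by split=> [|j]; [have := h ord0 | rewrite -tnth_cons].
by case: (unliftP ord0 j) => [j'|] ->; [rewrite tnth_cons | rewrite (tnth_nth 0)].
Qed.

Lemma in_cube0 (y : 0.-tuple R) : in_cube y.
Proof. by case. Qed.

Lemma eq_riint n (f g : n.-tuple R -> R) :
  (forall y, in_cube y -> f y = g y) -> riint f = riint g.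
Proof.
elim: n f g => [|n IH] f g fg /=; first exact/fg/in_cube0.
apply: eq_Rintegral => t; rewrite inE /= in_itv /= => ht.
by apply: IH => y hy; apply/fg/in_cube_cons.
Qed.

Lemma riint_prod n (I : finType) (c : I -> R) (phi : I -> 'I_n -> R -> R) :
  (forall r l, mu.-integrable I01 (EFin \o phi r l)) ->
  riint (fun y => \sum_r c r * \prod_l phi r l (tnth y l)) =
  \sum_r c r * \prod_l \int[mu]_(t in I01) phi r l t.
Proof.
elim: n c phi => [|n IH] c phi phi_int /=.
  by apply: eq_bigr => r _; rewrite !big_ord0.
pose K r := \prod_(l < n) \int[mu]_(t in I01) phi r (lift ord0 l) t.
have inner t : riint (fun y : n.-tuple R =>
      \sum_r c r * \prod_(l < n.+1) phi r l (tnth (cons_tuple t y) l)) =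
    \sum_r (c r * phi r ord0 t * K r).
  rewrite -(IH (fun r => c r * phi r ord0 t) (fun r l => phi r (lift ord0 l))) //.
  congr riint; apply/funext => y; apply: eq_bigr => r _.
  rewrite big_ord_recl mulrA (tnth_nth 0); congr (_ * _).
  by apply: eq_bigr => l _; rewrite !(tnth_nth 0).
under eq_Rintegral do rewrite inner.
rewrite Rintegral_sum => [|r]; last first.
  have := integrableZl_EFin (c r * K r) (phi_int r ord0).
  by apply: eq_integrable => // t _ /=; congr EFin; ring.
apply: eq_bigr => r _; under eq_Rintegral => t _ do rewrite mulrAC.
by rewrite RintegralZl // big_ord_recl /K; ring.
Qed.

(* Unlike [ge0_le_integral], no measurability is required: the sections of
   an iterated integral over the cube need not be known to be measurable. *)
Lemma le_integral_ge0 (D : set (measurableTypeR R)) (f1 f2 : R -> \bar R) :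
  (forall x, D x -> 0 <= f1 x)%E -> (forall x, D x -> f1 x <= f2 x)%E ->
  (\int[mu]_(x in D) f1 x <= \int[mu]_(x in D) f2 x)%E.
Proof.
move=> f1_ge0 f12; rewrite !ge0_integralE // => [|x Dx]; last first.
  exact: le_trans (f1_ge0 x Dx) (f12 x Dx).
apply: ereal_sup_le => _ /= [h hh <-]; exists h => // x.
apply: le_trans (hh x) _.
by rewrite /patch; case: ifP => // /set_mem Dx; exact: f12.
Qed.

Lemma eiint_ge0 n (f : n.-tuple R -> \bar R) :
  (forall y, in_cube y -> 0 <= f y)%E -> (0 <= eiint f)%E.
Proof.
elim: n f => [|n IH] f f_ge0 /=; first exact/f_ge0/in_cube0.
apply: integral_ge0 => t; rewrite /= in_itv /= => ht.
by apply: IH => y hy; apply/f_ge0/in_cube_cons.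
Qed.

Lemma le_eiint n (f g : n.-tuple R -> \bar R) :
  (forall y, in_cube y -> 0 <= f y)%E -> (forall y, in_cube y -> f y <= g y)%E ->
  (eiint f <= eiint g)%E.
Proof.
elim: n f g => [|n IH] f g f_ge0 fg /=; first exact/fg/in_cube0.
apply: le_integral_ge0 => t; rewrite /= in_itv /= => ht.
  by apply: eiint_ge0 => y hy; apply/f_ge0/in_cube_cons.
by apply: IH => y hy; [apply: f_ge0 | apply: fg]; exact/in_cube_cons.
Qed.

Lemma eiint_cst n (c : R) : eiint (fun _ : n.-tuple R => c%:E) = c%:E.
Proof.
elim: n => [|n IH] //=; under eq_integral do rewrite IH.
by rewrite integral_cst //= lebesgue_measure_I01 mule1.
Qed.

Lemma eiint_prod n (c : R) (psi : 'I_n -> R -> R) :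
  0 <= c -> (forall l t, 0 <= psi l t) ->
  (forall l, mu.-integrable I01 (EFin \o psi l)) ->
  eiint (fun y => (c * \prod_l psi l (tnth y l))%:E) =
  (c * \prod_l \int[mu]_(t in I01) psi l t)%:E.
Proof.
elim: n c psi => [|n IH] c psi c_ge0 psi_ge0 psi_int /=; first by rewrite !big_ord0.
pose K := \prod_(l < n) \int[mu]_(t in I01) psi (lift ord0 l) t.
have inner t : eiint (fun y : n.-tuple R =>
      (c * \prod_(l < n.+1) psi l (tnth (cons_tuple t y) l))%:E) =
    ((c * K) * psi ord0 t)%:E.
  rewrite mulrAC -(IH _ (fun l => psi (lift ord0 l))) ?mulr_ge0 //.
  congr eiint; apply/funext => y; congr EFin.
  rewrite big_ord_recl mulrA (tnth_nth 0); congr (_ * _).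
  by apply: eq_bigr => l _; rewrite !(tnth_nth 0).
under eq_integral do rewrite inner EFinM.
rewrite integralZl //; last exact: psi_int ord0.
rewrite big_ord_recl -/K [_ * K]mulrC mulrA [RHS]EFinM; congr (_ * _)%E.
by rewrite fineK //; exact: integrable_fin_num (psi_int ord0).
Qed.

Lemma eq_cint n (f g : n.-tuple R -> R[i]) :
  (forall y, in_cube y -> f y = g y) -> cint f = cint g.
Proof. by move=> fg; congr Complex; apply: eq_riint => y hy; rewrite fg. Qed.

Lemma cint0 n (f : n.-tuple R -> R[i]) : (forall y, in_cube y -> f y = 0) -> cint f = 0.
Proof.
move=> f0; rewrite (eq_cint f0).
have riint0 m : riint (fun _ : m.-tuple R => 0) = 0.
  elim: m => [|m IH] //=; under eq_Rintegral do rewrite IH.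
  by rewrite Rintegral_cst // mul0r.
pose zero := fun _ : n.-tuple R => 0 : R.
by transitivity (Complex (riint zero) (riint zero)); rewrite // riint0.
Qed.

Lemma Re_sum (I : finType) (F : I -> R[i]) : complex.Re (\sum_r F r) = \sum_r complex.Re (F r).
Proof. by apply: (big_morph (@complex.Re R)) => // [[a b] [c d]]. Qed.

Lemma Im_sum (I : finType) (F : I -> R[i]) : complex.Im (\sum_r F r) = \sum_r complex.Im (F r).
Proof. by apply: (big_morph (@complex.Im R)) => // [[a b] [c d]]. Qed.

Lemma Re_mul_real (z : R[i]) x : complex.Re (z * x%:C) = complex.Re z * x.
Proof. by case: z => a b /=; rewrite mulr0 subr0. Qed.

Lemma Im_mul_real (z : R[i]) x : complex.Im (z * x%:C) = complex.Im z * x.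
Proof. by case: z => a b /=; rewrite mulr0 add0r. Qed.

Lemma cint_prod n (I : finType) (C : I -> R[i]) (phi : I -> 'I_n -> R -> R) :
  (forall r l, mu.-integrable I01 (EFin \o phi r l)) ->
  cint (fun y => \sum_r C r * (\prod_l phi r l (tnth y l))%:C) =
  \sum_r C r * (\prod_l \int[mu]_(t in I01) phi r l t)%:C.
Proof.
move=> phi_int; apply/eqP; rewrite eq_complex /cint /=.
rewrite Re_sum Im_sum; under eq_bigr do rewrite Re_mul_real.
under [in X in _ && (_ == X)]eq_bigr do rewrite Im_mul_real.
rewrite -!riint_prod //; apply/andP; split; apply/eqP; congr riint; apply/funext => y.
  by rewrite Re_sum; under eq_bigr do rewrite Re_mul_real.
by rewrite Im_sum; under eq_bigr do rewrite Im_mul_real.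
Qed.

End CubeIntegrals.

Section Staircase.
Local Open Scope classical_set_scope.
Variables (R : realType) (N p : nat).
Local Notation mu := (@lebesgue_measure R).
Local Notation I01 := (`[(0:R), (1:R)[ : set (measurableTypeR R)).

Lemma index_enum_val (a : {set 'I_N}) (l : 'I_#|a|) : index (enum_val l) (enum a) = l.
Proof. by rewrite (enum_val_nth (enum_val l)) index_uniq ?enum_uniq // -cardE. Qed.

Lemma tnth_diamond_notin (a : {set 'I_N}) k (x : #|a|.-tuple R) i :
  i \notin a -> tnth (diamond k x) i = tnth k i.
Proof. by move=> /negbTE ia; rewrite tnth_mktuple ia. Qed.

Lemma tnth_diamond_enum_val (a : {set 'I_N}) k (x : #|a|.-tuple R) l :
  tnth (diamond k x) (enum_val l) = tnth x l.
Proof. by rewrite tnth_mktuple enum_valP index_enum_val (tnth_nth 0). Qed.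

Lemma diamond_prod (a : {set 'I_N}) k (x : #|a|.-tuple R) (F : 'I_N -> R -> R) :
  \prod_i F i (tnth (diamond k x) i) =
  (\prod_(i | i \notin a) F i (tnth k i)) * \prod_l F (enum_val l) (tnth x l).
Proof.
rewrite (bigID (mem a)) /= mulrC; congr (_ * _).
  by apply: eq_bigr => i ia; rewrite tnth_diamond_notin.
rewrite big_enum_val /=.
by apply: eq_bigr => l _; rewrite tnth_diamond_enum_val.
Qed.

Lemma staircase_eq_cell n (f : N.-tuple R -> n.-tuple R -> R[i]) k k' x :
  staircase p f -> in_cube k -> in_cube k' -> in_cube x ->
  (forall j (m : 'I_p), chiR p m (tnth k j) = chiR p m (tnth k' j)) -> f k x = f k' x.
Proof.
move=> [c fE] hk hk' hx same; rewrite !fE //.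
apply: eq_bigr => ii _; apply: eq_bigr => jj _; congr (_ * _ * _).
by apply: eq_bigr => j _; rewrite !chiE same.
Qed.

Lemma cint_staircase_prod (a : {set 'I_N}) (f : N.-tuple R -> #|a|.-tuple R -> R[i])
    (c : N.-tuple 'I_p -> #|a|.-tuple 'I_p -> R[i]) (F : 'I_N -> R -> R) k :
  (forall k x, in_cube k -> in_cube x ->
    f k x = \sum_ii \sum_jj c ii jj * (\prod_j chi p (tnth ii j) (tnth k j))
                                    * (\prod_j chi p (tnth jj j) (tnth x j))) ->
  (forall (jj : #|a|.-tuple 'I_p) l,
    mu.-integrable I01 (EFin \o (fun t => chiR p (tnth jj l) t * F (enum_val l) t))) ->
  in_cube k ->
  cint (fun x => f k x * (\prod_i F i (tnth (diamond k x) i))%:C) =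
  \sum_(jj : #|a|.-tuple 'I_p)
     (\sum_ii c ii jj * (\prod_j chiR p (tnth ii j) (tnth k j))%:C)
     * (\prod_(i | i \notin a) F i (tnth k i))%:C
     * (\prod_l \int[mu]_(t in I01) (chiR p (tnth jj l) t * F (enum_val l) t))%:C.
Proof.
move=> fE F_int hk; rewrite -(cint_prod _ F_int); apply: eq_cint => x hx.
rewrite fE // diamond_prod mulr_suml; under [LHS]eq_bigr do rewrite mulr_suml.
rewrite exchange_big /=; apply: eq_bigr => jj _.
rewrite !mulr_suml; apply: eq_bigr => ii _.
under eq_bigr do rewrite chiE; under [X in _ * X * _]eq_bigr do rewrite chiE.
rewrite -!rmorph_prod big_split /= !rmorphM /=; ring.
Qed.

End Staircase.

Section SquaredModulus.
Variable R : realType.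

Definition sqmod (z : R[i]) : R := complex.Re z ^+ 2 + complex.Im z ^+ 2.

Lemma sqmod_ge0 z : 0 <= sqmod z.
Proof. by rewrite addr_ge0 ?sqr_ge0. Qed.

Lemma sqmod_eq0 z : (sqmod z == 0) = (z == 0).
Proof. by rewrite -(inj_eq (@complexI R)) rmorph0 add_Re2_Im2 sqrf_eq0 normr_eq0. Qed.

Lemma sqnorm_ge0 M (v : 'I_M -> R[i]) : 0 <= sqnorm v.
Proof. by apply: sumr_ge0 => j _; exact: sqmod_ge0. Qed.

Lemma sqnorm_ge_coord M (v : 'I_M -> R[i]) j : sqmod (v j) <= sqnorm v.
Proof.
rewrite /sqnorm (bigD1 j) //= lerDl.
by apply: sumr_ge0 => j' _; exact: sqmod_ge0.
Qed.

End SquaredModulus.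

Section Uniqueness.
(* Keeps the set argument of [A] explicit. *)
Unset Implicit Arguments.
Local Open Scope classical_set_scope.
Variables (R : realType) (N M p : nat).
Hypothesis p_gt0 : (0 < p)%N.
Variable A : forall a : {set 'I_N}, N.-tuple R -> #|a|.-tuple R -> 'M[R[i]]_M.
Hypothesis A_staircase : forall a, mx_staircase p (A a).
Variables (b : {set 'I_N}) (k0 : N.-tuple R) (x0 : #|b|.-tuple R) (i0 j0 : 'I_M).
Hypotheses (k0_cube : in_cube k0) (x0_cube : in_cube x0).
Local Notation mu := (@lebesgue_measure R).
Local Notation I01 := (`[(0:R), (1:R)[ : set (measurableTypeR R)).

Definition test_factor (i : 'I_N) : R -> R :=
  if i \in b then same_cell p (tnth (diamond k0 x0) i) else haar p.

Definition test_fun (k : N.-tuple R) (j : 'I_M) : R[i] :=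
  (if j == j0 then \prod_i test_factor i (tnth k i) else 0)%:C.

Definition test_term (a : {set 'I_N}) (k : N.-tuple R) : R[i] :=
  cint (fun x => A a k x i0 j0 * (\prod_i test_factor i (tnth (diamond k x) i))%:C).

Lemma test_inL2 : inL2 test_fun.
Proof.
have factor_meas i : measurable_fun setT (test_factor i).
  rewrite /test_factor; case: ifP => _.
    exact: measurable_same_cell.
  exact: measurable_haar.
have factor_le i t : `|test_factor i t| <= p%:R.
  by rewrite /test_factor; case: ifP => _; [exact: norm_same_cell_le | exact: norm_haar_le].
split=> [j|].
  split; last exact: measurable_cst.
  rewrite /test_fun; case: (j == j0) => /=; last exact: measurable_cst.
  apply: measurable_prod => i _; exact: measurableT_comp (factor_meas i) (measurable_tnth i).
apply: (le_lt_trans (y := eiint (fun _ : N.-tuple R => ((p%:R ^+ N) ^+ 2)%:E))).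
  apply: le_eiint => k _; rewrite lee_fin ?sqnorm_ge0 //.
  rewrite /sqnorm (bigD1 j0) //= [X in _ + X <= _]big1 ?addr0; last first.
    by move=> j /negbTE ne_j; rewrite /test_fun ne_j /= expr0n addr0.
  rewrite /test_fun eqxx /= expr0n /= addr0 -real_normK ?num_real // lerXn2r ?nnegrE //.
  rewrite normr_prod -[in X in _ <= X](card_ord N) -prodr_const.
  by apply: ler_prod => i _; rewrite normr_ge0 factor_le.
by rewrite eiint_cst ltry.
Qed.

Lemma opA_test_fun (k : N.-tuple R) : opA A test_fun k i0 = \sum_a test_term a k.
Proof.
apply: eq_bigr => a _; congr cint; apply/funext => x.
rewrite (bigD1 j0) //= big1 ?addr0 => [|j /negbTE ne_j]; first by rewrite /test_fun eqxx.
by rewrite /test_fun ne_j rmorph0 mulr0.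
Qed.

Lemma integrable_chiR_test_factor (m : 'I_p) i :
  mu.-integrable I01 (EFin \o (fun t => chiR p m t * test_factor i t)).
Proof.
rewrite /test_factor; case: ifP => _.
  exact: integrable_chiR_same_cell.
exact: integrable_chiR_haar.
Qed.

Lemma test_term_notsub (a : {set 'I_N}) (k : N.-tuple R) :
  in_cube k -> ~~ (a \subset b) -> test_term a k = 0.
Proof.
move=> hk /subsetPn[i ia nib]; have [c cE] := A_staircase a i0 j0.
rewrite /test_term (cint_staircase_prod cE) // => [|jj l]; last first.
  exact: integrable_chiR_test_factor.
apply: big1 => jj _; rewrite (bigD1 (enum_rank_in ia i)) //= enum_rankK_in //.
by rewrite /test_factor (negbTE nib) Rintegral_chiR_haar // mul0r rmorph0 mulr0.
Qed.

Lemma test_term_diag (k : N.-tuple R) : in_cube k ->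
  test_term b k =
  (p%:R^-1 ^+ #|b| * \prod_(i | i \notin b) haar p (tnth k i))%:C * A b k x0 i0 j0.
Proof.
move=> hk; have [c cE] := A_staircase b i0 j0.
rewrite /test_term (cint_staircase_prod cE) // => [|jj l]; last first.
  exact: integrable_chiR_test_factor.
have factor_int (jj : #|b|.-tuple 'I_p) l :
    \int[mu]_(t in I01) (chiR p (tnth jj l) t * test_factor (enum_val l) t) =
    chiR p (tnth jj l) (tnth x0 l) / p%:R.
  by rewrite /test_factor enum_valP /= tnth_diamond_enum_val Rintegral_chiR_same_cell.
have outside : \prod_(i | i \notin b) test_factor i (tnth k i) =
    \prod_(i | i \notin b) haar p (tnth k i).
  by apply: eq_bigr => i /negbTE nib; rewrite /test_factor nib.
rewrite (cE k x0) // mulr_sumr; under [RHS]eq_bigr do rewrite mulr_sumr.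
rewrite exchange_big /=; apply: eq_bigr => jj _.
rewrite (eq_bigr _ (fun l _ => factor_int jj l)) big_split /= prodr_const card_ord outside.
rewrite !mulr_suml; apply: eq_bigr => ii _.
under [X in _ = _ * (_ * X * _)]eq_bigr do rewrite chiE.
under [X in _ = _ * (_ * _ * X)]eq_bigr do rewrite chiE.
rewrite -!rmorph_prod !rmorphM /=; ring.
Qed.

Hypothesis A_eq0_below : forall a : {set 'I_N}, (#|a| < #|b|)%N ->
  forall k x, in_cube k -> in_cube x -> A a k x = 0.

Lemma opA_test (k : N.-tuple R) : in_cube k ->
  opA A test_fun k i0 =
  (p%:R^-1 ^+ #|b| * \prod_(i | i \notin b) haar p (tnth k i))%:C * A b k x0 i0 j0.
Proof.
move=> hk; rewrite opA_test_fun (bigD1 b) //= test_term_diag //.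
rewrite [X in _ + X]big1 ?addr0 // => a ne_ab.
have [sub_ab|] := boolP (a \subset b); last exact: test_term_notsub.
have lt_ab : (#|a| < #|b|)%N by apply: proper_card; rewrite finset.properEneq ne_ab sub_ab.
by apply: cint0 => x hx; rewrite A_eq0_below // mxE mul0r.
Qed.

Lemma sqnorm_opA_test_ge (k : N.-tuple R) : in_cube k ->
  sqmod ((p%:R^-1 ^+ #|b|)%:C * A b k0 x0 i0 j0)
    * \prod_i left_half p (tnth k0 i) (tnth k i) <= sqnorm (opA A test_fun k).
Proof.
move=> hk; set P := \prod_i _.
have [->|P_neq0] := eqVneq P 0; first by rewrite mulr0 sqnorm_ge0.
have cell i : exists m : 'I_p,
    chiR p m (tnth k0 i) = 1 /\ chiR (2 * p) (2 * m) (tnth k i) = 1.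
  apply: left_half_neq0; apply: contra P_neq0 => /eqP half0.
  by rewrite /P (bigD1 i) //= half0 mul0r.
have haar1 i : haar p (tnth k i) = 1 by have [m [_ h]] := cell i; exact: haar_left_half h.
have A_eq : A b k x0 i0 j0 = A b k0 x0 i0 j0.
  apply: (staircase_eq_cell (A_staircase b i0 j0)) => // j m.
  have [m' [h1 h2]] := cell j.
  by rewrite (chiR_eq1E p_gt0 (chiR_left_half p_gt0 h2)) (chiR_eq1E p_gt0 h1).
apply: le_trans (sqnorm_ge_coord _ i0).
rewrite opA_test // (eq_bigr _ (fun i _ => haar1 i)) big1_eq mulr1 A_eq.
rewrite ler_piMr ?sqmod_ge0 // prodr_ile1 // => i _.
by rewrite left_half_ge0 left_half_le1.
Qed.

Hypothesis opA_eq0 : forall u : N.-tuple R -> 'I_M -> R[i],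
  inL2 u -> eiint (fun k => (sqnorm (opA A u k))%:E) = 0%E.

Lemma staircase_entry_eq0 : A b k0 x0 i0 j0 = 0.
Proof.
pose L := sqmod ((p%:R^-1 ^+ #|b|)%:C * A b k0 x0 i0 j0).
have L_ge0 : 0 <= L by exact: sqmod_ge0.
pose half i := left_half p (tnth k0 i).
have : (eiint (fun k => (L * \prod_i half i (tnth k i))%:E)
    <= eiint (fun k => (sqnorm (opA A test_fun k))%:E))%E.
  apply: le_eiint => k hk; rewrite lee_fin; last exact: sqnorm_opA_test_ge.
  by rewrite mulr_ge0 // prodr_ge0 // => i _; exact: left_half_ge0.
rewrite opA_eq0; last exact: test_inL2.
rewrite eiint_prod //; last 2 first.
- by move=> i t; exact: left_half_ge0.
- by move=> i; exact: integrable_left_half.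
rewrite lee_fin (eq_bigr _ (fun i _ => Rintegral_left_half p_gt0 (k0_cube i))).
rewrite prodr_const card_ord pmulr_lle0 ?exprn_gt0 ?invr_gt0 ?ltr0n ?muln_gt0 //.
move=> L_le0; have /eqP : L = 0 by apply/eqP; rewrite eq_le L_le0 L_ge0.
rewrite sqmod_eq0 mulf_eq0 fmorph_eq0 expf_eq0 invr_eq0 pnatr_eq0.
by rewrite (negbTE (lt0n_neq0 p_gt0)) andbF => /eqP.
Qed.

End Uniqueness.

Unset Implicit Arguments.

Theorem lemma1 (R : realType) (N M p : nat) (hN : (0 < N)%N) (hM : (0 < M)%N)
    (hp : (0 < p)%N)
    (A : forall alpha : {set 'I_N},
           N.-tuple R -> #|alpha|.-tuple R -> 'M[R[i]]_M) :
  (forall alpha : {set 'I_N}, mx_staircase p (A alpha)) ->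
  (forall u : N.-tuple R -> 'I_M -> R[i],
      inL2 u -> eiint (fun k => (sqnorm (opA A u k))%:E) = 0%E) ->
  forall (alpha : {set 'I_N}) (k : N.-tuple R) (x : #|alpha|.-tuple R),
    in_cube k -> in_cube x -> A alpha k x = 0.
Proof.
move=> A_staircase opA_eq0.
suff A_eq0 n (a : {set 'I_N}) : (#|a| < n)%N ->
    forall k x, in_cube k -> in_cube x -> A a k x = 0.
  by move=> a; exact: A_eq0 _ a (ltnSn _).
elim: n a => [//|n IH] a lt_an k x hk hx; apply/matrixP => i j; rewrite mxE.
apply: (staircase_entry_eq0 _ _ _ _ hp A A_staircase) => // a' lt_a'a.
by apply: IH; exact: leq_trans lt_a'a lt_an.
Qed.
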